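(* Let $\ell$ be a prime, $E$ a finite extension of $\mathbb{Q}_\ell$, and let $\mathrm{Cts}(\widehat{\mathbb{Z}}^n,E)$ be the ring of continuous maps $\widehat{\mathbb{Z}}^n\to E$ with the compact-open topology. Let $G$ be a profinite group and $\rho\colon G\to\mathrm{GL}_m(\mathrm{Cts}(\widehat{\mathbb{Z}}^n,E))$ a continuous homomorphism. For $x\in\widehat{\mathbb{Z}}^n$ let $\rho_x\colon G\to\mathrm{GL}_m(E)$ be the composition of $\rho$ with evaluation at $x$. Suppose that for each standard generator of $\widehat{\mathbb{Z}}^n$ there exists an isomorphism of $\rho$ with its pullback along translation by that generator on $\widehat{\mathbb{Z}}^n$. Then the representations $\rho_x$ are pairwise isomorphic for all $x\in\widehat{\mathbb{Z}}^n$; moreover, there exists $h\in\mathrm{GL}_m(\mathrm{Cts}(\widehat{\mathbb{Z}}^n,E))$ such that $\rho$ takes values in $h^{-1}\mathrm{GL}_m(E)h$.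
   Context: The pullback of $\rho$ along a translation $t\colon\widehat{\mathbb{Z}}^n\to\widehat{\mathbb{Z}}^n$ is the composition of $\rho$ with the ring automorphism $f\mapsto f\circ t$ of $\mathrm{Cts}(\widehat{\mathbb{Z}}^n,E)$ applied entrywise; an isomorphism is a matrix in $\mathrm{GL}_m(\mathrm{Cts}(\widehat{\mathbb{Z}}^n,E))$ intertwining the two representations. $\mathrm{GL}_m(E)$ is viewed inside $\mathrm{GL}_m(\mathrm{Cts}(\widehat{\mathbb{Z}}^n,E))$ as constant functions. *)

From HB Require Import structures.
From mathcomp Require Import all_boot all_order all_algebra.
From mathcomp Require Import all_classical all_reals all_analysis.
Set Implicit Arguments. Unset Strict Implicit. Unset Printing Implicit Defensive.
Import Order.TTheory GRing.Theory Num.Theory.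

(* The profinite integers Zhat = lim_k Z/kZ, realised as compatible         *)
(* families of residues: a m is the residue modulo m.+1.                    *)
Definition zhat_cond (a : nat -> nat) : Prop :=
  forall m m' : nat, (m.+1 %| m'.+1)%N -> (a m' %% m.+1)%N = a m.

Record Zhat := ZHat { zval : nat -> nat; zvalP : zhat_cond zval }.

Lemma zsucc_cond (a : Zhat) : zhat_cond (fun m => ((zval a m).+1 %% m.+1)%N).
Proof.
move=> m m' dv /=.
by rewrite modn_dvdm // -[(zval a m').+1]addn1 -modnDml (zvalP a dv) addn1.
Qed.

Definition zsucc (a : Zhat) : Zhat := ZHat (zsucc_cond a).

Definition Zhatn (n : nat) := 'I_n -> Zhat.

Definition ztrans (n : nat) (i : 'I_n) (x : Zhatn n) : Zhatn n :=
  fun j => if j == i then zsucc (x j) else x j.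

(* the profinite (product) topology on Zhat^n: basic neighbourhoods of x are
   the sets of y agreeing with x modulo 1, 2, ..., N+1 in every coordinate *)
Definition zclose (n N : nat) (x y : Zhatn n) : Prop :=
  forall (i : 'I_n) (m : nat), (m <= N)%N -> zval (y i) m = zval (x i) m.

Section LocalField.
Local Open Scope ring_scope.
Variables (R : realType) (E : fieldType) (nrm : E -> R).

(* E is a finite extension of Q_l, with its l-adic topology:
   nrm is a complete non-archimedean absolute value on the characteristic-0
   field E with |l| < 1 (so its restriction to Q is l-adic, and the closure
   of Q in E is Q_l), and E is finite-dimensional over that copy of Q_l. *)
Definition in_Ql (y : E) : Prop :=
  forall eps : R, 0 < eps -> exists q : rat, nrm (y - ratr q) < eps.

Record ell_adic_field (l : nat) : Prop := {
  nrm_eq0 : forall x, nrm x = 0 <-> x = 0;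
  nrm_mul : forall x y, nrm (x * y) = nrm x * nrm y;
  nrm_ultra : forall x y, nrm (x + y) <= Num.max (nrm x) (nrm y);
  char0 : forall k : nat, (k%:R : E) = 0 -> k = 0%N;
  nrm_l : nrm (l%:R) < 1;
  complete : forall u : nat -> E,
    (forall eps : R, 0 < eps -> exists N, forall p q, (N <= p)%N -> (N <= q)%N ->
        nrm (u p - u q) < eps) ->
    exists y, forall eps : R, 0 < eps -> exists N, forall p, (N <= p)%N ->
        nrm (u p - y) < eps;
  finite_over_Ql : exists (d : nat) (b : 'I_d -> E), forall y : E,
    exists c : 'I_d -> E, (forall k, in_Ql (c k)) /\ y = \sum_(k < d) c k * b k
}.

Definition cts_fun (n : nat) (f : Zhatn n -> E) : Prop :=
  forall (x : Zhatn n) (eps : R), 0 < eps ->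
    exists N, forall y, zclose N x y -> nrm (f y - f x) < eps.

(* matrices over Cts(Zhat^n, E), represented pointwise *)
Definition cts_mx (n m : nat) (P : Zhatn n -> 'M[E]_m) : Prop :=
  forall i j : 'I_m, cts_fun (fun x => P x i j).

Definition GLCts (n m : nat) (P : Zhatn n -> 'M[E]_m) : Prop :=
  cts_mx P /\ exists Q : Zhatn n -> 'M[E]_m, cts_mx Q /\
    forall x, P x *m Q x = 1%:M /\ Q x *m P x = 1%:M.

(* continuity of g |-> rho g into GL_m(Cts(Zhat^n,E)), where Cts carries the
   compact-open topology, i.e. (Zhat^n compact, E metric) the topology of
   uniform convergence, and matrices carry the product topology *)
Definition cts_rep (G : topologicalType) (n m : nat)
  (rho : G -> Zhatn n -> 'M[E]_m) : Prop :=
  forall (g : G) (eps : R), 0 < eps ->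
    exists U : set G, open U /\ U g /\
      forall g', U g' -> forall x i j, nrm (rho g' x i j - rho g x i j) < eps.

End LocalField.

Record profinite_group (G : topologicalType) (mul : G -> G -> G) (inv : G -> G)
    (one : G) : Prop := {
  pg_assoc : forall a b c, mul a (mul b c) = mul (mul a b) c;
  pg_mul1 : forall a, mul one a = a;
  pg_mulV : forall a, mul (inv a) a = one;
  pg_cts : continuous (fun p : G * G => mul p.1 (inv p.2));
  pg_compact : compact [set: G];
  pg_hausdorff : hausdorff_space G;
  pg_tdisc : totally_disconnected [set: G]
}.

(* Fix a base point [x0]. The intertwiners from [rho_x0] to [rho_y] form the
   common left kernel of the linear maps [A |-> A rho_x0(g) - rho_y(g) A], and a
   finite combination [defect_sum x0 y L] of these maps of maximal rank already
   has exactly that left kernel. The translation isomorphisms preserve the rank,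
   the rank is lower semicontinuous and integer points are dense, so the maximum
   is attained at [y = x0]. The rank is then constant near [x0], and a fixed
   nonsingular minor of [defect_sum x0 y L] yields intertwiners [Q(y)] depending
   continuously on [y] near [x0], with [Q(x0) = 1]. An integer translation that
   is locally constant in [y] moves any [y] close to [x0], and the translation
   isomorphisms carry [Q] back, giving a continuous family of invertible
   intertwiners on all of [Zhat^n]. *)

From HB Require Import structures.
From mathcomp Require Import all_boot all_order all_algebra.
From mathcomp Require Import all_classical all_reals all_analysis.
From mathcomp Require Import ring.
Import Order.TTheory GRing.Theory Num.Theory.
Set Implicit Arguments. Unset Strict Implicit. Unset Printing Implicit Defensive.
Local Open Scope ring_scope.

Record nonarch_abs (R : realFieldType) (E : fieldType) (nrm : E -> R) : Prop := {
  abs_eq0 : forall x, nrm x = 0 <-> x = 0;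
  absM : forall x y, nrm (x * y) = nrm x * nrm y;
  abs_ultra : forall x y, nrm (x + y) <= Num.max (nrm x) (nrm y);
  absN1 : nrm (-1) = 1 }.

Section AbsoluteValue.
Variables (R : realFieldType) (E : fieldType) (nrm : E -> R).

Lemma abs1_of_mul : (forall x, nrm x = 0 <-> x = 0) ->
  (forall x y, nrm (x * y) = nrm x * nrm y) -> nrm 1 = 1.
Proof.
move=> h0 hM; have n10 : nrm 1 != 0 by apply/eqP => /h0/eqP; rewrite oner_eq0.
by apply: (mulIf n10); rewrite mul1r -hM mulr1.
Qed.

Hypothesis hN : nonarch_abs nrm.

Lemma abs0 : nrm 0 = 0. Proof. exact/(abs_eq0 hN). Qed.
Lemma abs1 : nrm 1 = 1. Proof. exact: abs1_of_mul (abs_eq0 hN) (absM hN). Qed.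

Lemma absN x : nrm (- x) = nrm x.
Proof. by rewrite -mulN1r (absM hN) (absN1 hN) mul1r. Qed.

Lemma absB x y : nrm (x - y) = nrm (y - x).
Proof. by rewrite -absN opprB. Qed.

Lemma abs_ge0 x : 0 <= nrm x.
Proof. by have := abs_ultra hN x (- x); rewrite subrr abs0 absN maxxx. Qed.

Lemma abs_gt0 x : x != 0 -> 0 < nrm x.
Proof.
by move=> x0; rewrite lt_def abs_ge0 andbT; apply: contra x0 => /eqP/(abs_eq0 hN) ->.
Qed.

Lemma absD_le x y c : nrm x <= c -> nrm y <= c -> nrm (x + y) <= c.
Proof. by move=> hx hy; rewrite (le_trans (abs_ultra hN x y)) // ge_max hx. Qed.

Lemma absD_lt x y c : nrm x < c -> nrm y < c -> nrm (x + y) < c.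
Proof. by move=> hx hy; rewrite (le_lt_trans (abs_ultra hN x y)) // gt_max hx. Qed.

Lemma absD_dom x y : nrm y < nrm x -> nrm (x + y) = nrm x.
Proof.
move=> yx; apply/eqP; rewrite eq_le absD_le ?(ltW yx) //=.
have := abs_ultra hN (x + y) (- y); rewrite addrK absN le_max.
by case/orP=> // /(lt_le_trans yx); rewrite ltxx.
Qed.

Lemma absV x : nrm x^-1 = (nrm x)^-1.
Proof.
have [->|x0] := eqVneq x 0; first by rewrite invr0 abs0 invr0.
have nx0 : nrm x != 0 by rewrite gt_eqF ?abs_gt0.
by apply: (mulIf nx0); rewrite -(absM hN) !mulVf // abs1.
Qed.

End AbsoluteValue.

(* The axioms of [ell_adic_field] do not say that [nrm] is nonnegative;
   [nrm (-1) = -1] is excluded by [|l| < 1]. *)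
Lemma ell_adic_nonarch_abs (R : realType) (E : fieldType) (nrm : E -> R) (l : nat) :
  prime l -> ell_adic_field nrm l -> nonarch_abs nrm.
Proof.
move=> l_pr hE; have h0 := nrm_eq0 hE; have hM := nrm_mul hE.
have hU := nrm_ultra hE; have abs1 := abs1_of_mul h0 hM.
split => //; have : nrm (-1) ^+ 2 == 1 by rewrite expr2 -hM mulrNN mulr1 abs1.
rewrite sqrf_eq1 => /orP[/eqP // | /eqP absN1].
have absN x : nrm (- x) = - nrm x by rewrite -mulN1r hM absN1 mulN1r.
have absD_gt0 a b : 0 < nrm a -> 0 < nrm b -> 0 < nrm (a + b).
  move=> a_gt0 b_gt0; have := hU (a + b) (- b); rewrite addrK absN le_max.
  case/orP=> [/(lt_le_trans a_gt0) // | ab].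
  by have := lt_le_trans a_gt0 ab; rewrite oppr_gt0 ltNge (ltW b_gt0).
have abs_nat_gt0 k : 0 < nrm k.+1%:R.
  by elim: k => [|k IHk]; rewrite ?abs1 // -addn1 natrD absD_gt0 // abs1.
have [k def_l] : exists k, l = k.+2.
  by exists l.-2; have := prime_gt1 l_pr; case: (l) => [|[]].
have e1 : l%:R - k.+1%:R = 1 :> E by rewrite def_l mulrSr addrAC subrr add0r.
have := hU l%:R (- k.+1%:R); rewrite e1 abs1 absN le_max => /orP[].
  by move=> /le_lt_trans /(_ (nrm_l hE)); rewrite ltxx.
by rewrite leNgt (lt_trans _ ltr01) // oppr_lt0.
Qed.

Lemma exists_argmax_nat (T : Type) (f : T -> nat) (t0 : T) (b : nat) :
  (forall t, f t <= b)%N -> exists t, forall t', (f t' <= f t)%N.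
Proof.
move=> fb; pose im k := `[< exists t, f t = k >].
have im_f0 : exists k, im k by exists (f t0); apply/asboolP; exists t0.
have im_b k : im k -> (k <= b)%N by move=> /asboolP[t <-].
case: (ex_maxnP im_f0 im_b) => _ /asboolP[t <-] fmax.
by exists t => t'; apply: fmax; apply/asboolP; exists t'.
Qed.

Lemma zval_lt (a : Zhat) k : (zval a k < k.+1)%N.
Proof. by rewrite -(zvalP a (dvdnn k.+1)) ltn_mod. Qed.

Lemma zhat_cond0 : zhat_cond (fun=> 0%N).
Proof. by move=> k k' _; rewrite mod0n. Qed.

Definition zhat0 : Zhat := ZHat zhat_cond0.

Fixpoint ztrans_seq n (s : seq 'I_n) (x : Zhatn n) : Zhatn n :=
  if s is i :: s' then ztrans_seq s' (ztrans i x) else x.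

Lemma zval_ztrans_seq n (s : seq 'I_n) x j k :
  zval (ztrans_seq s x j) k = ((zval (x j) k + count_mem j s) %% k.+1)%N.
Proof.
elim: s x => [|i s IHs] x /=; first by rewrite addn0 modn_small ?zval_lt.
rewrite IHs /ztrans; have [-> | //] := eqVneq j i.
by rewrite modnDml add1n addnS addSn.
Qed.

Lemma zclose_le n N N' (x y : Zhatn n) : (N <= N')%N -> zclose N' x y -> zclose N x y.
Proof. by move=> NN' xy i k kN; apply/xy/(leq_trans kN). Qed.

Lemma zclose_refl n N (x : Zhatn n) : zclose N x x.
Proof. by []. Qed.
Arguments zclose_refl {n} N x.

Lemma zclose_ztrans_seq n N (s : seq 'I_n) x y :
  zclose N x y -> zclose N (ztrans_seq s x) (ztrans_seq s y).
Proof. by move=> xy i k kN; rewrite !zval_ztrans_seq xy. Qed.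

Lemma zclose_mod_fact n N (x y : Zhatn n) :
  (forall i, zval (y i) (N.+1`!).-1 = zval (x i) (N.+1`!).-1) -> zclose N x y.
Proof.
move=> xy i k kN; have dvd_k : (k.+1 %| (N.+1`!).-1.+1)%N.
  by rewrite prednK ?fact_gt0 // dvdn_fact.
by rewrite -(zvalP (y i) dvd_k) -(zvalP (x i) dvd_k) xy.
Qed.

Definition seq_of_counts n (v : 'I_n -> nat) : seq 'I_n :=
  flatten [seq nseq (v i) i | i <- enum 'I_n].

Lemma count_seq_of_counts n (v : 'I_n -> nat) j : count_mem j (seq_of_counts v) = v j.
Proof.
rewrite count_flatten -map_comp (eq_map (_ : _ =1 fun i => (i == j) * v i)%N).
  rewrite sumnE big_map big_enum /= (bigD1 j) //= eqxx mul1n big1 ?addn0 //.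
  by move=> i /negPf ->.
by move=> i /=; rewrite count_nseq /= eq_sym.
Qed.

(* An integer vector congruent to [x - y] modulo [(N.+1)`!], listed as a
   sequence of generators. *)
Definition approx_shift n N (x y : Zhatn n) : seq 'I_n :=
  let K := (N.+1`!).-1 in seq_of_counts (fun i => K.+1 - zval (y i) K + zval (x i) K)%N.

Lemma zclose_approx_shift n N (x y : Zhatn n) :
  zclose N x (ztrans_seq (approx_shift N x y) y).
Proof.
apply: zclose_mod_fact => i; rewrite zval_ztrans_seq count_seq_of_counts addnA subnKC.
  by rewrite modnDl modn_small ?zval_lt.
exact/ltnW/zval_lt.
Qed.
Arguments zclose_approx_shift {n} N x y.

Lemma approx_shift_near n N (x y y' : Zhatn n) :
  zclose (N.+1`!).-1 y y' -> approx_shift N x y' = approx_shift N x y.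
Proof.
by move=> yy'; rewrite /approx_shift /seq_of_counts; under eq_map do rewrite yy' //.
Qed.
Arguments approx_shift_near {n N} x {y y'}.

Section RankMinors.
Variable F : fieldType.

Lemma exists_rank_minor p q (A : 'M[F]_(p, q)) :
  exists (f : 'I_(\rank A) -> 'I_p) (g : 'I_(\rank A) -> 'I_q), \det (mxsub f g A) != 0.
Proof.
pose f := maxrankfun A; pose B := rowsub f A.
have rBt : \rank B^T = \rank A by rewrite mxrank_tr; apply/eqP; apply: maxrowsub_free.
suff [g gfree] : exists g : 'I_(\rank B^T) -> 'I_q, row_free (rowsub g B^T).
  move: g gfree; rewrite rBt => g gfree; exists f, g.
  have -> : mxsub f g A = (rowsub g B^T)^T by apply/matrixP => i j; rewrite !mxE.
  by rewrite det_tr -unitfE -unitmxE -row_free_unit.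
by exists (maxrankfun B^T); apply: maxrowsub_free.
Qed.

Lemma mxrank_colsub_leq p q s (A : 'M[F]_(p, q)) (g : 'I_s -> 'I_q) :
  (\rank (colsub g A) <= \rank A)%N.
Proof. by rewrite -[A in colsub _ A]mulmx1 -mulmx_colsub mxrankM_maxl. Qed.

Lemma rank_minor_leq p q s (A : 'M[F]_(p, q)) (f : 'I_s -> 'I_p) (g : 'I_s -> 'I_q) :
  \det (mxsub f g A) != 0 -> (s <= \rank A)%N.
Proof.
rewrite -unitfE -unitmxE => /mxrank_unit <-; rewrite mxsubcr.
exact: leq_trans (mxrank_colsub_leq _ _) (mxrankS (rowsub_sub _ _)).
Qed.

(* Unlike [pinvmx], its entries are rational functions of those of [A] as long
   as the chosen minor stays nonsingular. *)
Definition minor_pinv p q s (f : 'I_s -> 'I_p) (g : 'I_s -> 'I_q) (A : 'M[F]_(p, q)) :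
  'M[F]_(q, p) := colsub g 1%:M *m invmx (mxsub f g A) *m rowsub f 1%:M.

Lemma mulmx_minor_pinv p q s (A : 'M[F]_(p, q)) (f : 'I_s -> 'I_p) (g : 'I_s -> 'I_q) :
  mxsub f g A \in unitmx -> \rank A = s -> A *m minor_pinv f g A *m A = A.
Proof.
move=> Au rA; have sBA : (rowsub f A <= A)%MS by apply: rowsub_sub.
have /submxP[T defA] : (A <= rowsub f A)%MS.
  rewrite -(mxrank_leqif_sup sBA).2 eqn_leq mxrankS //= rA -{1}(mxrank_unit Au).
  by rewrite mxsubcr mxrank_colsub_leq.
have defAg : A *m colsub g 1%:M = T *m mxsub f g A.
  by rewrite {1}defA mulmx_colsub mulmx1 -mulmx_colsub [mxsub f g A]mxsubcr.
by rewrite /minor_pinv !mulmxA defAg mulmxK // -mulmxA mul_rowsub_mx mul1mx -defA.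
Qed.

Lemma submx_rank_update N r (Z : 'M[F]_N) (Y : 'M[F]_(r, N)) :
  (forall U, \rank (Z + U *m Y)%R <= \rank Z)%N -> (Y <= Z)%MS.
Proof.
move=> hZ; have [Zfull | Zdef] := eqVneq (\rank Z) N; first exact/submx_full/eqP.
have [w wZ [j wj0]] : exists2 w : 'rV_N, w *m Z = 0 & exists j, w 0 j != 0.
  have : kermx Z != 0.
    by rewrite -mxrank_eq0 mxrank_ker subn_eq0 -ltnNge ltn_neqAle Zdef rank_leq_row.
  case/matrix0Pn => i [j Kij0]; exists (row i (kermx Z)); last by exists j; rewrite mxE.
  by rewrite -row_mul mulmx_ker row0.
have wc : w *m ((w 0 j)^-1 *: delta_mx j 0) = 1%:M.
  by rewrite -scalemxAr -colE (mx11_scalar (col j w)) mxE scale_scalar_mx mulVf.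
apply/row_subP => k.
pose U := (w 0 j)^-1 *: delta_mx j 0 *m (delta_mx 0 k : 'rV[F]_r).
have kS : (row k Y <= (Z + U *m Y)%R)%MS.
  by apply/submxP; exists w; rewrite mulmxDr wZ add0r /U !mulmxA wc mul1mx -rowE.
have UYS : (U *m Y <= (Z + U *m Y)%R)%MS.
  by apply: submx_trans kS; rewrite /U -mulmxA -rowE submxMl.
have ZS : (Z <= (Z + U *m Y)%R)%MS.
  by rewrite -{1}(addrK (U *m Y) Z) addmx_sub // eqmx_opp.
apply: submx_trans kS _; rewrite -(mxrank_leqif_sup ZS).2.
by rewrite eqn_leq mxrankS //= hZ.
Qed.

Lemma rank_update_factor N r (Z : 'M[F]_N) (Y : 'M[F]_(N, r)) :
  (forall U, \rank (Z + Y *m U)%R <= \rank Z)%N -> exists D, Y = Z *m D.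
Proof.
move=> hZ; have /submxP[D defY] : (Y^T <= Z^T)%MS.
  apply: submx_rank_update => U; rewrite -[X in (_ <= X)%N]mxrank_tr.
  by rewrite -mxrank_tr linearD /= trmx_mul !trmxK.
by exists D^T; rewrite -[Y]trmxK defY trmx_mul trmxK.
Qed.

End RankMinors.

Section Continuity.
Variables (R : realFieldType) (E : fieldType) (nrm : E -> R) (n : nat).
Hypothesis hN : nonarch_abs nrm.
Implicit Types (f g : Zhatn n -> E) (x y : Zhatn n).

Definition cts_at f x : Prop :=
  forall eps : R, 0 < eps -> exists N, forall y, zclose N x y -> nrm (f y - f x) < eps.

Lemma cts_at_near f g x N :
  (forall y, zclose N x y -> f y = g y) -> cts_at g x -> cts_at f x.
Proof.
move=> fg cg eps eps_gt0; have [N' hg] := cg eps eps_gt0.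
exists (maxn N N') => y xy; rewrite !fg ?hg //; apply: zclose_le xy;
  by rewrite ?leq_maxl ?leq_maxr.
Qed.

Lemma eq_cts_at f g x : f =1 g -> cts_at g x -> cts_at f x.
Proof. by move=> fg; apply: (cts_at_near (N := 0%N)) => y _; apply: fg. Qed.

Lemma cts_at_cst (c : E) x : cts_at (fun=> c) x.
Proof. by exists 0%N => y _; rewrite subrr (abs0 hN). Qed.

Lemma cts_atD f g x : cts_at f x -> cts_at g x -> cts_at (fun y => f y + g y) x.
Proof.
move=> cf cg eps eps_gt0; have [Nf hf] := cf eps eps_gt0.
have [Ng hg] := cg eps eps_gt0; exists (maxn Nf Ng) => y xy.
rewrite opprD addrACA absD_lt // ?hf ?hg //; apply: zclose_le xy;
  by rewrite ?leq_maxl ?leq_maxr.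
Qed.

Lemma cts_atN f x : cts_at f x -> cts_at (fun y => - f y) x.
Proof.
move=> cf eps /cf[N hf]; exists N => y /hf.
by rewrite -opprD (absN hN).
Qed.

Lemma cts_atM f g x : cts_at f x -> cts_at g x -> cts_at (fun y => f y * g y) x.
Proof.
move=> cf cg eps eps_gt0; set a := nrm (f x); set b := nrm (g x).
have a1_gt0 : 0 < a + 1 by rewrite ltr_wpDl ?(abs_ge0 hN).
have b1_gt0 : 0 < b + 1 by rewrite ltr_wpDl ?(abs_ge0 hN).
have [Nf hf] : exists Nf, forall y, zclose Nf x y ->
    nrm (f y - f x) < Num.min 1 (eps / (b + 1)).
  by apply: cf; rewrite lt_min ltr01 divr_gt0.
have [Ng hg] : exists Ng, forall y, zclose Ng x y -> nrm (g y - g x) < eps / (a + 1).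
  by apply: cg; rewrite divr_gt0.
exists (maxn Nf Ng) => y xy.
have /andP[fy1 fy_eps] : (nrm (f y - f x) < 1) && (nrm (f y - f x) < eps / (b + 1)).
  by rewrite -lt_min (hf _ (zclose_le (leq_maxl _ _) xy)).
have gy_eps : nrm (g y - g x) < eps / (a + 1).
  exact: (hg _ (zclose_le (leq_maxr _ _) xy)).
have fy_le : nrm (f y) <= a + 1.
  have a1_ge1 : 1 <= a + 1 by rewrite lerDr (abs_ge0 hN).
  by rewrite -(subrK (f x) (f y)) (absD_le hN) ?lerDl // ltW // (lt_le_trans fy1).
rewrite (_ : f y * g y - f x * g x = f y * (g y - g x) + (f y - f x) * g x); last by ring.
apply: (absD_lt hN); rewrite (absM hN).
  rewrite (le_lt_trans (ler_wpM2r (abs_ge0 hN _) fy_le)) // mulrC -ltr_pdivlMr //.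
rewrite (le_lt_trans (ler_wpM2l (abs_ge0 hN _) (_ : b <= b + 1))) ?lerDl //.
by rewrite -ltr_pdivlMr.
Qed.

Lemma cts_atV f x : cts_at f x -> f x != 0 -> cts_at (fun y => (f y)^-1) x.
Proof.
move=> cf fx0 eps eps_gt0; set a := nrm (f x).
have a_gt0 : 0 < a by apply: abs_gt0.
have [N hf] : exists N, forall y, zclose N x y ->
    nrm (f y - f x) < Num.min a (eps * (a * a)).
  by apply: cf; rewrite lt_min a_gt0 !mulr_gt0.
exists N => y /hf; rewrite lt_min => /andP[fy_a fy_eps].
have nfy : nrm (f y) = a by rewrite -(subrK (f x) (f y)) addrC (absD_dom hN).
have fy0 : f y != 0 by apply: contraTneq a_gt0 => fy0; rewrite -nfy fy0 (abs0 hN) ltxx.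
rewrite (_ : _ - _ = (f x - f y) / (f y * f x)); last by field; apply/andP.
by rewrite (absM hN) (absV hN) (absM hN) nfy (absB hN) ltr_pdivrMr ?mulr_gt0.
Qed.

Lemma cts_at_neq0 f x : cts_at f x -> f x != 0 ->
  exists N, forall y, zclose N x y -> f y != 0.
Proof.
move=> cf fx0; have [N hf] := cf _ (abs_gt0 hN fx0); exists N => y /hf.
by apply: contraTneq => ->; rewrite sub0r (absN hN) ltxx.
Qed.

Lemma cts_at_sum (I : Type) (r : seq I) (P : pred I) (F : I -> Zhatn n -> E) x :
  (forall i, P i -> cts_at (F i) x) -> cts_at (fun y => \sum_(i <- r | P i) F i y) x.
Proof.
move=> cF; elim: r => [|i r IHr].
  by apply: (eq_cts_at (g := fun=> 0)) (cts_at_cst _ _) => y; rewrite big_nil.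
pose G y := (if P i then F i y else 0) + \sum_(j <- r | P j) F j y.
apply: (eq_cts_at (g := G)) => [y|]; rewrite /G.
  by rewrite big_cons; case: (P i); rewrite ?add0r.
by apply: (cts_atD _ IHr); case Pi: (P i); [exact: cF | exact: cts_at_cst].
Qed.

Lemma cts_at_prod (I : Type) (r : seq I) (P : pred I) (F : I -> Zhatn n -> E) x :
  (forall i, P i -> cts_at (F i) x) -> cts_at (fun y => \prod_(i <- r | P i) F i y) x.
Proof.
move=> cF; elim: r => [|i r IHr].
  by apply: (eq_cts_at (g := fun=> 1)) (cts_at_cst _ _) => y; rewrite big_nil.
pose G y := (if P i then F i y else 1) * \prod_(j <- r | P j) F j y.
apply: (eq_cts_at (g := G)) => [y|]; rewrite /G.
  by rewrite big_cons; case: (P i); rewrite ?mul1r.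
by apply: (cts_atM _ IHr); case Pi: (P i); [exact: cF | exact: cts_at_cst].
Qed.

Lemma cts_at_ztrans_seq (s : seq 'I_n) f x :
  cts_at f (ztrans_seq s x) -> cts_at (fun y => f (ztrans_seq s y)) x.
Proof. by move=> cf eps /cf[N hf]; exists N => y /(zclose_ztrans_seq s)/hf. Qed.

Definition mx_cts_at p q (M : Zhatn n -> 'M[E]_(p, q)) x : Prop :=
  forall i j, cts_at (fun y => M y i j) x.

Lemma mx_cts_at_near p q (M M' : Zhatn n -> 'M[E]_(p, q)) x N :
  (forall y, zclose N x y -> M y = M' y) -> mx_cts_at M' x -> mx_cts_at M x.
Proof. by move=> MM' cM' i j; apply: (cts_at_near (N := N)) (cM' i j) => y /MM' ->. Qed.

Lemma mx_cts_at_entry p q (M : Zhatn n -> 'M[E]_(p, q))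
    (F : 'I_p -> 'I_q -> Zhatn n -> E) x :
  (forall y i j, M y i j = F i j y) -> (forall i j, cts_at (F i j) x) -> mx_cts_at M x.
Proof. by move=> MF cF i j; apply: eq_cts_at (cF i j) => y; apply: MF. Qed.

Lemma mx_cts_at_cst p q (A : 'M[E]_(p, q)) x : mx_cts_at (fun=> A) x.
Proof. by move=> i j; apply: cts_at_cst. Qed.

Lemma mx_cts_atB p q (A B : Zhatn n -> 'M[E]_(p, q)) x :
  mx_cts_at A x -> mx_cts_at B x -> mx_cts_at (fun y => A y - B y) x.
Proof.
move=> cA cB; apply: (mx_cts_at_entry (F := fun i j y => A y i j + - B y i j)).
  by move=> y i j; rewrite !mxE.
by move=> i j; apply: cts_atD (cts_atN _).
Qed.

Lemma mx_cts_atZ p q (c : Zhatn n -> E) (A : Zhatn n -> 'M[E]_(p, q)) x :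
  cts_at c x -> mx_cts_at A x -> mx_cts_at (fun y => c y *: A y) x.
Proof.
move=> cc cA; apply: (mx_cts_at_entry (F := fun i j y => c y * A y i j)).
  by move=> y i j; rewrite mxE.
by move=> i j; apply: cts_atM.
Qed.

Lemma mx_cts_atM p q r (A : Zhatn n -> 'M[E]_(p, q)) (B : Zhatn n -> 'M[E]_(q, r)) x :
  mx_cts_at A x -> mx_cts_at B x -> mx_cts_at (fun y => A y *m B y) x.
Proof.
move=> cA cB; apply: (mx_cts_at_entry (F := fun i j y => \sum_k A y i k * B y k j)).
  by move=> y i j; rewrite mxE.
by move=> i j; apply: cts_at_sum => k _; apply: cts_atM.
Qed.

Lemma mx_cts_at_sum p q (I : Type) (r : seq I) (F : I -> Zhatn n -> 'M[E]_(p, q)) x :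
  (forall i, mx_cts_at (F i) x) -> mx_cts_at (fun y => \sum_(i <- r) F i y) x.
Proof.
move=> cF; apply: (mx_cts_at_entry (F := fun a b y => \sum_(i <- r) F i y a b)).
  by move=> y a b; rewrite summxE.
by move=> a b; apply: cts_at_sum => i _; apply: cF.
Qed.

Lemma mx_cts_at_mxsub p q p' q' (f : 'I_p' -> 'I_p) (g : 'I_q' -> 'I_q)
    (A : Zhatn n -> 'M[E]_(p, q)) x :
  mx_cts_at A x -> mx_cts_at (fun y => mxsub f g (A y)) x.
Proof.
by move=> cA; apply: (mx_cts_at_entry (F := fun i j y => A y (f i) (g j))) => *;
  rewrite ?mxE.
Qed.

Lemma mx_cts_at_det p (A : Zhatn n -> 'M[E]_p) x :
  mx_cts_at A x -> cts_at (fun y => \det (A y)) x.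
Proof.
move=> cA; apply: cts_at_sum => s _; apply: cts_atM; first exact: cts_at_cst.
by apply: cts_at_prod => i _; apply: cA.
Qed.

Lemma mx_cts_at_adj p (A : Zhatn n -> 'M[E]_p) x :
  mx_cts_at A x -> mx_cts_at (fun y => \adj (A y)) x.
Proof.
move=> cA; apply: (mx_cts_at_entry
  (F := fun i j y => (-1) ^+ (j + i) * \det (row' j (col' i (A y))))).
  by move=> y i j; rewrite mxE.
move=> i j; apply: cts_atM; first exact: cts_at_cst.
apply/mx_cts_at_det/(mx_cts_at_entry (F := fun a b y => A y (lift j a) (lift i b))).
  by move=> y a b; rewrite !mxE.
by move=> a b; apply: cA.
Qed.

Lemma mx_cts_at_inv p (A : Zhatn n -> 'M[E]_p) x :
  mx_cts_at A x -> A x \in unitmx -> mx_cts_at (fun y => invmx (A y)) x.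
Proof.
move=> cA; rewrite unitmxE unitfE => detA0.
have cdet := mx_cts_at_det cA; have [N detA] := cts_at_neq0 cdet detA0.
apply: (mx_cts_at_near (N := N) (M' := fun y => (\det (A y))^-1 *: \adj (A y))).
  by move=> y /detA detAy; rewrite /invmx unitmxE unitfE detAy.
by apply: mx_cts_atZ; [apply: cts_atV | apply: mx_cts_at_adj].
Qed.

Lemma mx_cts_at_vec_mx p q (v : Zhatn n -> 'rV[E]_(p * q)) x :
  mx_cts_at v x -> mx_cts_at (fun y => vec_mx (v y)) x.
Proof.
by move=> cv; apply: (mx_cts_at_entry (F := fun i j y => v y 0 (mxvec_index i j))) => *;
  rewrite ?mxE.
Qed.

Lemma mx_cts_at_lin_mulmx p (A : Zhatn n -> 'M[E]_p) x :
  mx_cts_at A x -> mx_cts_at (fun y => lin_mulmx (p := p) (A y)) x.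
Proof.
move=> cA; apply: (mx_cts_at_entry
  (F := fun i j y => mxvec (A y *m vec_mx (delta_mx 0 i)) 0 j)).
  by move=> y i j; rewrite mxE.
move=> i j; case/mxvec_indexP: j => a b.
apply: (eq_cts_at (g := fun y => (A y *m vec_mx (delta_mx 0 i)) a b)).
  by move=> y; rewrite mxvecE.
by apply: mx_cts_atM => //; apply: mx_cts_at_cst.
Qed.

Lemma mx_cts_at_ztrans_seq p q (s : seq 'I_n) (M : Zhatn n -> 'M[E]_(p, q)) x :
  mx_cts_at M (ztrans_seq s x) -> mx_cts_at (fun y => M (ztrans_seq s y)) x.
Proof. by move=> cM i j; apply: (cts_at_ztrans_seq (f := fun y => M y i j)). Qed.

Lemma rank_lsc p q (M : Zhatn n -> 'M[E]_(p, q)) x : mx_cts_at M x ->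
  exists N, forall y, zclose N x y -> (\rank (M x) <= \rank (M y))%N.
Proof.
move=> cM; have [f [g detMx]] := exists_rank_minor (M x).
have [N detM] := cts_at_neq0 (mx_cts_at_det (mx_cts_at_mxsub f g cM)) detMx.
by exists N => y /detM; apply: rank_minor_leq.
Qed.

(* The rank is locally constant near [x], so a single nonsingular minor of
   [M x] serves for all nearby [M y]. *)
Lemma kernel_projector p q (M : Zhatn n -> 'M[E]_(p, q)) x :
  (forall y, mx_cts_at M y) -> (forall y, \rank (M y) <= \rank (M x))%N ->
  exists N (Pr : Zhatn n -> 'M[E]_p), (forall v : 'rV_p, v *m M x = 0 -> v *m Pr x = v) /\
    forall y, zclose N x y ->
      [/\ \rank (M y) = \rank (M x), mx_cts_at Pr y & Pr y *m M y = 0].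
Proof.
move=> cM rM; have [f [g detMx]] := exists_rank_minor (M x).
have [N detM] := cts_at_neq0 (mx_cts_at_det (mx_cts_at_mxsub f g (cM x))) detMx.
pose Pr y := 1%:M - M y *m minor_pinv f g (M y).
exists N, Pr; split=> [v vM | y xy].
  by rewrite mulmxBr mulmx1 mulmxA vM mul0mx subr0.
have Muy : mxsub f g (M y) \in unitmx by rewrite unitmxE unitfE detM.
have rMy : \rank (M y) = \rank (M x).
  by apply/eqP; rewrite eqn_leq rM (rank_minor_leq (detM y xy)).
split => //; last by rewrite mulmxBl mul1mx mulmx_minor_pinv ?subrr.
apply: mx_cts_atB; first exact: mx_cts_at_cst.
apply: mx_cts_atM (cM y) _; apply: mx_cts_atM; last exact: mx_cts_at_cst.
apply: mx_cts_atM; first exact: mx_cts_at_cst.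
by apply: mx_cts_at_inv Muy; apply: mx_cts_at_mxsub.
Qed.

End Continuity.

Section Intertwiners.
Variables (E : fieldType) (G X : Type) (m : nat) (rho : G -> X -> 'M[E]_m).

Definition intertwines x y (A : 'M[E]_m) : Prop :=
  forall g, A *m rho g x = rho g y *m A.

Lemma intertwines1 x : intertwines x x 1%:M.
Proof. by move=> g; rewrite mul1mx mulmx1. Qed.

Lemma intertwinesM x y w A B :
  intertwines x y A -> intertwines y w B -> intertwines x w (B *m A).
Proof. by move=> hA hB g; rewrite -mulmxA hA !mulmxA hB. Qed.

Lemma intertwinesV x y A :
  A \in unitmx -> intertwines x y A -> intertwines y x (invmx A).
Proof.
by move=> Au hA g; apply: (can_inj (mulKmx Au)); rewrite mulKVmx // mulmxA hA mulmxK.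
Qed.

Definition defect_mx g x y : 'M[E]_(m * m) :=
  @lin_mulmxr E m m m (rho g x) - lin_mulmx (p := m) (rho g y).

Lemma mxvec_defect_mx g x y (A : 'M[E]_m) :
  mxvec A *m defect_mx g x y = mxvec (A *m rho g x - rho g y *m A).
Proof. by rewrite mulmxBr !mul_vec_lin /= linearB. Qed.

Lemma intertwinesP x y A :
  intertwines x y A <-> forall g, mxvec A *m defect_mx g x y = 0.
Proof.
split=> hA g; first by rewrite mxvec_defect_mx hA subrr linear0.
by apply/eqP; rewrite -subr_eq0 -(can_eq mxvecK) linear0 -mxvec_defect_mx hA.
Qed.

Definition defect_sum x y (L : seq (G * 'M[E]_(m * m))) : 'M[E]_(m * m) :=
  \sum_(u <- L) defect_mx u.1 x y *m u.2.

Lemma defect_sum_cons x y g U L :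
  defect_sum x y ((g, U) :: L) = defect_sum x y L + defect_mx g x y *m U.
Proof. by rewrite /defect_sum big_cons addrC. Qed.

Lemma intertwines_defect_sum x y A L :
  intertwines x y A -> mxvec A *m defect_sum x y L = 0.
Proof.
move/intertwinesP=> hA; rewrite mulmx_sumr big1 // => u _.
by rewrite mulmxA hA mul0mx.
Qed.

(* Adding one more term to a [defect_sum] of maximal rank does not change its
   column space, so its left kernel consists of intertwiners. *)
Lemma defect_sum_max_ker x y L v :
  (forall L', \rank (defect_sum x y L') <= \rank (defect_sum x y L))%N ->
  v *m defect_sum x y L = 0 -> intertwines x y (vec_mx v).
Proof.
move=> Lmax vL; apply/intertwinesP => g; rewrite vec_mxK.
have [D ->] : exists D, defect_mx g x y = defect_sum x y L *m D.
  by apply: rank_update_factor => U; rewrite -defect_sum_cons.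
by rewrite mulmxA vL mul0mx.
Qed.

Lemma eq_mx_mxvec k (K1 K2 : 'M[E]_(m * m, k)) :
  (forall A : 'M[E]_m, mxvec A *m K1 = mxvec A *m K2) -> K1 = K2.
Proof.
move=> eqK; apply/row_matrixP => i; rewrite !rowE.
by have := eqK (vec_mx (delta_mx 0 i)); rewrite vec_mxK.
Qed.

Lemma lin_mulmx_unit (A : 'M[E]_m) :
  A \in unitmx -> lin_mulmx (p := m) A \in unitmx.
Proof.
move=> Au; suff /mulmx1_unit[] : lin_mulmx (p := m) A *m lin_mulmx (invmx A) = 1%:M by [].
by apply: eq_mx_mxvec => B; rewrite mulmxA !mul_vec_lin /= mulmxA mulVmx ?mul1mx ?mulmx1.
Qed.

Lemma defect_mx_conj x y y' A g :
  A \in unitmx -> intertwines y y' A ->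
  defect_mx g x y' = lin_mulmx (p := m) (invmx A) *m defect_mx g x y *m lin_mulmx A.
Proof.
move=> Au hA; apply: eq_mx_mxvec => B.
rewrite !mulmxA mul_vec_lin !mxvec_defect_mx mul_vec_lin /=; congr mxvec.
by rewrite mulmxBr !mulmxA mulmxV // mul1mx hA -!mulmxA mulKVmx.
Qed.

Lemma rank_defect_sum_conj x y y' A L :
  A \in unitmx -> intertwines y y' A ->
  \rank (defect_sum x y' L) =
  \rank (defect_sum x y [seq (u.1, lin_mulmx (p := m) A *m u.2) | u <- L]).
Proof.
move=> Au hA; set L' := map _ L.
have -> : defect_sum x y' L = lin_mulmx (p := m) (invmx A) *m defect_sum x y L'.
  rewrite /defect_sum big_map mulmx_sumr; apply: eq_bigr => u _.
  by rewrite (defect_mx_conj _ _ Au hA) !mulmxA.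
by rewrite eqmxMfull ?row_full_unit ?lin_mulmx_unit ?unitmx_inv.
Qed.

End Intertwiners.

Section TranslationInvariantFamily.
Variables (R : realFieldType) (E : fieldType) (nrm : E -> R) (n m : nat) (G : Type).
Variables (rho : G -> Zhatn n -> 'M[E]_m) (P : 'I_n -> Zhatn n -> 'M[E]_m).
Variable x0 : Zhatn n.
Hypothesis hN : nonarch_abs nrm.
Hypothesis rho_cts : forall g x, mx_cts_at nrm (rho g) x.
Hypothesis P_cts : forall i x, mx_cts_at nrm (P i) x.
Hypothesis P_unit : forall i x, P i x \in unitmx.
Hypothesis P_int : forall i x, intertwines rho x (ztrans i x) (P i x).

Fixpoint trans_iso (s : seq 'I_n) (x : Zhatn n) : 'M[E]_m :=
  if s is i :: s' then trans_iso s' (ztrans i x) *m P i x else 1%:M.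

Lemma trans_iso_unit s x : trans_iso s x \in unitmx.
Proof.
by elim: s x => [|i s IHs] x /=; rewrite ?unitmx1 // unitmx_mul IHs P_unit.
Qed.

Lemma trans_iso_intertwines s x : intertwines rho x (ztrans_seq s x) (trans_iso s x).
Proof.
elim: s x => [|i s IHs] x /=; first exact: intertwines1.
exact: intertwinesM (P_int i x) (IHs _).
Qed.

Lemma trans_iso_cts s x : mx_cts_at nrm (trans_iso s) x.
Proof.
elim: s x => [|i s IHs] x; first exact: mx_cts_at_cst.
apply: (mx_cts_at_near (N := 0%N)
  (M' := fun y => trans_iso s (ztrans i y) *m P i y)) => //.
have cT : mx_cts_at nrm (fun y => trans_iso s (ztrans i y)) x.
  exact: (mx_cts_at_ztrans_seq (s := [:: i]) (IHs _)).
exact: (mx_cts_atM hN cT (P_cts i x)).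
Qed.

Lemma defect_sum_cts L x : mx_cts_at nrm (fun y => defect_sum rho x0 y L) x.
Proof.
apply: (mx_cts_at_sum hN) => u; apply: (mx_cts_atM hN _ (mx_cts_at_cst hN _ _)).
exact: (mx_cts_atB hN (mx_cts_at_cst hN _ _) (mx_cts_at_lin_mulmx hN (rho_cts _ _))).
Qed.

Lemma max_rank_at_base : exists L0, forall x L,
  (\rank (defect_sum rho x0 x L) <= \rank (defect_sum rho x0 x0 L0))%N.
Proof.
have [[x1 L1] max1] := exists_argmax_nat
  (f := fun u => \rank (defect_sum rho x0 u.1 u.2)) (x0, [::]) (fun u => rank_leq_row _).
have [N lsc] := rank_lsc hN (defect_sum_cts L1 x1).
pose s := approx_shift N x1 x0.
exists [seq (u.1, lin_mulmx (p := m) (trans_iso s x0) *m u.2) | u <- L1] => x L.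
rewrite -(rank_defect_sum_conj _ _ (trans_iso_unit s x0) (trans_iso_intertwines s x0)) /=.
exact: leq_trans (max1 (x, L)) (lsc _ (zclose_approx_shift N x1 x0)).
Qed.

Lemma local_intertwiner : exists N (Q0 : Zhatn n -> 'M[E]_m), forall y, zclose N x0 y ->
  [/\ Q0 y \in unitmx, mx_cts_at nrm Q0 y & intertwines rho x0 y (Q0 y)].
Proof.
have [L0 L0max] := max_rank_at_base.
have [N [Pr [Pr_x0 Pr_near]]] := kernel_projector hN (defect_sum_cts L0) (L0max ^~ L0).
pose Q0 y := vec_mx (mxvec 1%:M *m Pr y).
have Q0_x0 : Q0 x0 = 1%:M.
  by rewrite /Q0 Pr_x0 ?mxvecK // intertwines_defect_sum //; apply: intertwines1.
have Q0_cts y : zclose N x0 y -> mx_cts_at nrm Q0 y.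
  case/Pr_near => _ cPr _; apply/mx_cts_at_vec_mx/(mx_cts_atM hN) => //.
  exact: mx_cts_at_cst.
have detQ0_x0 : \det (Q0 x0) != 0 by rewrite Q0_x0 det1 oner_neq0.
have [N' detQ0] :=
  cts_at_neq0 hN (mx_cts_at_det hN (Q0_cts x0 (zclose_refl N x0))) detQ0_x0.
exists (maxn N N'), Q0 => y xy.
have xy_N := zclose_le (leq_maxl N N') xy; have xy_N' := zclose_le (leq_maxr N N') xy.
have [rk _ PrM] := Pr_near y xy_N.
split.
- by rewrite unitmxE unitfE detQ0.
- exact: Q0_cts.
- apply: (defect_sum_max_ker (L := L0)); first by move=> L'; rewrite rk L0max.
  by rewrite -mulmxA PrM mulmx0.
Qed.

Lemma global_intertwiner : exists Q : Zhatn n -> 'M[E]_m, forall y,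
  [/\ Q y \in unitmx, mx_cts_at nrm Q y & intertwines rho x0 y (Q y)].
Proof.
have [N [Q0 Q0_near]] := local_intertwiner.
pose s y := approx_shift N x0 y.
pose Q y := invmx (trans_iso (s y) y) *m Q0 (ztrans_seq (s y) y).
exists Q => y; have [Q0u Q0c Q0i] := Q0_near _ (zclose_approx_shift N x0 y).
have Tu := trans_iso_unit (s y) y.
split.
- by rewrite unitmx_mul unitmx_inv Tu.
- apply: (mx_cts_at_near (N := (N.+1`!).-1)
    (M' := fun w => invmx (trans_iso (s y) w) *m Q0 (ztrans_seq (s y) w))).
    by move=> w yw; rewrite /Q /s (approx_shift_near x0 yw).
  apply: (mx_cts_atM hN (mx_cts_at_inv hN (trans_iso_cts _ _) Tu)).
  exact: mx_cts_at_ztrans_seq.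
- exact: intertwinesM Q0i (intertwinesV Tu (trans_iso_intertwines _ _)).
Qed.

End TranslationInvariantFamily.

Lemma GLCts_cts (R : realType) (E : fieldType) (nrm : E -> R) n m
    (A : Zhatn n -> 'M[E]_m) :
  GLCts nrm A -> forall x, mx_cts_at nrm A x.
Proof. by case=> cA _ x i j; apply: cA. Qed.

Lemma GLCts_unit (R : realType) (E : fieldType) (nrm : E -> R) n m
    (A : Zhatn n -> 'M[E]_m) :
  GLCts nrm A -> forall x, A x \in unitmx.
Proof. by case=> _ [B [_ AB]] x; case/mulmx1_unit: (AB x).1. Qed.

Theorem lemma2p4 (l : nat) (hl : prime l) (R : realType) (E : fieldType)
  (nrm : E -> R) (hE : ell_adic_field nrm l) (n m : nat)
  (G : topologicalType) (mul : G -> G -> G) (inv : G -> G) (one : G)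
  (hG : profinite_group mul inv one)
  (rho : G -> Zhatn n -> 'M[E]_m)
  (rho_GL : forall g, GLCts nrm (rho g))
  (rho_hom : forall g h x, rho (mul g h) x = rho g x *m rho h x)
  (rho_cts : cts_rep nrm rho)
  (htrans : forall i : 'I_n, exists P : Zhatn n -> 'M[E]_m,
     GLCts nrm P /\ forall g x, P x *m rho g x = rho g (ztrans i x) *m P x) :
  (forall x y : Zhatn n, exists A : 'M[E]_m, A \in unitmx /\
     forall g, A *m rho g x = rho g y *m A) /\
  (exists h : Zhatn n -> 'M[E]_m, GLCts nrm h /\
     forall g, exists c : 'M[E]_m, c \in unitmx /\
       forall x, rho g x = invmx (h x) *m c *m h x).
Proof.
have hN := ell_adic_nonarch_abs hl hE.
have [P hP] := choice htrans.
have [Q hQ] := global_intertwiner (fun=> zhat0) hN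
  (fun g => GLCts_cts (rho_GL g)) (fun i => GLCts_cts (hP i).1)
  (fun i => GLCts_unit (hP i).1) (fun i x g => (hP i).2 g x).
split=> [x y | ].
  have [Qxu _ Qx] := hQ x; have [Qyu _ Qy] := hQ y.
  exists (Q y *m invmx (Q x)); split; first by rewrite unitmx_mul unitmx_inv Qxu Qyu.
  exact: intertwinesM (intertwinesV Qxu Qx) Qy.
exists (fun x => invmx (Q x)); split.
  split=> [a b x | ]; first by have [Qu Qc _] := hQ x; apply: (mx_cts_at_inv hN Qc Qu).
  exists Q; split=> [a b x | x]; first by have [_ Qc _] := hQ x; apply: Qc.
  by have [Qu _ _] := hQ x; rewrite mulVmx ?mulmxV.
move=> g; exists (rho g (fun=> zhat0)); split; first exact: GLCts_unit (rho_GL g) _.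
by move=> x; have [Qu _ Qx] := hQ x; rewrite invmxK Qx mulmxK.
Qed.
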